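(* Let $d,r$ be positive integers, $n=dr$, and let $\gamma\in\mathcal S_n$ have cycle structure $d^r$. Suppose $(\varepsilon,\varepsilon,\gamma;(123))\in\mathrm{Par}(n)$. Then: <ul> <li>(i) if $3\mid d$ then $3\mid r$;</li> <li>(ii) if $6\mid d$ then $6\mid r$.</li> </ul>
   Context: A Latin square of order $n$ is an $n\times n$ array with rows, columns and symbols indexed by $[n]$, each symbol occurring once in each row and each column, with triple set $O(L)$. Permutations act on the right; $\varepsilon$ is the identity. A paratopism $(\alpha,\beta,\gamma;(123))$ maps $L$ to $L^\sigma$ with triple set $\{(z\gamma,x\alpha,y\beta):(x,y,z)\in O(L)\}$; it is an autoparatopism of $L$ if $L^\sigma=L$. $\mathrm{Par}(n)$ is the set of paratopisms that are autoparatopisms of at least one Latin square of order $n$. *)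

From HB Require Import structures.
From mathcomp Require Import all_boot all_order all_fingroup.
Set Implicit Arguments. Unset Strict Implicit. Unset Printing Implicit Defensive.

Definition is_latin (n : nat) (L : 'I_n -> 'I_n -> 'I_n) : Prop :=
  (forall x, injective (L x)) /\ (forall y, injective (fun x => L x y)).

Definition triples (n : nat) (L : 'I_n -> 'I_n -> 'I_n) : {set 'I_n * 'I_n * 'I_n} :=
  [set t : 'I_n * 'I_n * 'I_n | L t.1.1 t.1.2 == t.2].

(* Image of O(L) under the paratopism (alpha,beta,gamma;(123)):
   {(z gamma, x alpha, y beta) : (x,y,z) in O(L)}; permutations act on the
   right, so "x alpha" is the value of alpha at x. *)
Definition para123_image (n : nat) (alpha beta gamma : 'S_n)
  (L : 'I_n -> 'I_n -> 'I_n) : {set 'I_n * 'I_n * 'I_n} :=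
  [set ((gamma t.2, alpha t.1.1), beta t.1.2) | t in triples L].

Definition autopara123 (n : nat) (alpha beta gamma : 'S_n)
  (L : 'I_n -> 'I_n -> 'I_n) : Prop :=
  para123_image alpha beta gamma L = triples L.

Definition in_Par123 (n : nat) (alpha beta gamma : 'S_n) : Prop :=
  exists L : 'I_n -> 'I_n -> 'I_n, is_latin L /\ autopara123 alpha beta gamma L.

From mathcomp Require Import all_boot all_order all_fingroup zify.
Set Implicit Arguments. Unset Strict Implicit. Unset Printing Implicit Defensive.

(* Label every point by its position [pos x] in its gamma-cycle, so that
   gamma adds 1 mod d, and let [gap a b] be the distance from a to b modulo d.
   The hypothesis says that sigma : (x, y, z) |-> (z gamma, x, y) permutes the
   cells of L; consequently gamma is an automorphism of L, and every
   gamma-invariant cell function has a total sum equal to d times its sum over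
   the rows with position 0.  Around the 3-cycle of sigma through a cell the
   gaps sum to -1 mod d, and for 3 | d the class pos x + pos y + pos z mod 3
   is advanced by sigma, so summing these three gaps over the class-0 cells
   counts every gap of L exactly once.  Averaging over the base rows, d must divide r^2 C(d,2) + d r^2 / 3, which
   forces 3 | r.  When d is even, the triangle relation alone makes d divide
   r^2 C(d,2), which forces 2 | r. *)

Lemma iter_modn (T : Type) (f : T -> T) d y m :
  iter d f y = y -> iter m f y = iter (m %% d) f y.
Proof.
move=> fd; rewrite {1}(divn_eq m d) addnC iterD; congr iter.
by elim: (m %/ d) => [|q IHq]; rewrite ?mul0n // mulSn iterD IHq fd.
Qed.

Lemma expg_invariant (T : finType) (U : Type) (s : {perm T}) (rho : T -> U) k x :
  (forall x, rho (s x) = rho x) -> rho ((s ^+ k)%g x) = rho x.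
Proof.
by move=> rhoS; elim: k => [|k IHk]; rewrite ?expg0 ?perm1 // expgSr permM rhoS.
Qed.

Lemma sum2D (I J : finType) (F G : I -> J -> nat) :
  \sum_i \sum_j (F i j + G i j) = \sum_i \sum_j F i j + \sum_i \sum_j G i j.
Proof. by rewrite -big_split; apply: eq_bigr => i _; rewrite big_split. Qed.

Lemma bin2_double d : 2 * 'C(d, 2) = d * d.-1.
Proof. by rewrite -mul_bin_diag bin1. Qed.

Lemma porbit_position n d (g : 'S_n) : 0 < d -> (forall x, #|porbit g x| = d) ->
  exists pos : 'I_n -> nat,
    (forall x, pos x < d) /\ (forall x, pos (g x) = (pos x + 1) %% d).
Proof.
move=> d_gt0 card_orbit.
pose rep x := odflt x [pick y in porbit g x].
have rep_orbit x : rep x \in porbit g x.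
  by rewrite /rep; case: pickP => [y //|/(_ x)]; rewrite porbit_id.
have porbitS x : porbit g (g x) = porbit g x.
  by have := porbit_perm g 1 x; rewrite expg1.
have repS x : rep (g x) = rep x.
  by rewrite /rep porbitS; case: pickP => [y //|/(_ x)]; rewrite porbit_id.
have orbit_rep x : porbit g (rep x) = porbit g x.
  by apply/eqP; rewrite eq_porbit_mem rep_orbit.
have x_in x : x \in traject g (rep x) d.
  by rewrite -(card_orbit (rep x)) -porbit_traject orbit_rep porbit_id.
have uniq_tr x : uniq (traject g (rep x) d).
  by rewrite -(card_orbit (rep x)) uniq_traject_porbit.
have index_lt x : index x (traject g (rep x) d) < d.
  by rewrite -[X in _ < X](size_traject g (rep x) d) index_mem.
exists (fun x => index x (traject g (rep x) d)); split=> // x; rewrite repS.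
set k := index x _.
have xE : x = iter k g (rep x) by rewrite -(nth_traject _ (index_lt x)) nth_index.
have rep_period : iter d g (rep x) = rep x by rewrite -{1}(card_orbit (rep x)) iter_porbit.
have -> : g x = iter ((k + 1) %% d) g (rep x) by rewrite -iter_modn // addn1 iterS -xE.
by rewrite -(nth_traject g (ltn_pmod (k + 1) d_gt0)) index_uniq // size_traject ltn_pmod.
Qed.

Section CyclePosition.

Variables (n d : nat) (g : 'S_n) (pos : 'I_n -> nat).
Hypothesis d_gt0 : 0 < d.
Hypothesis pos_lt : forall x, pos x < d.
Hypothesis posS : forall x, pos (g x) = (pos x + 1) %% d.

Lemma pos_expg k x : pos ((g ^+ k)%g x) = (pos x + k) %% d.
Proof.
elim: k => [|k IHk]; first by rewrite expg0 perm1 addn0 modn_small.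
by rewrite expgSr permM posS IHk modnDml addn1 addnS.
Qed.

Lemma posS_cases x :
  (pos x + 1 = d /\ pos (g x) = 0) \/ (pos x + 1 < d /\ pos (g x) = pos x + 1).
Proof.
rewrite posS; have := pos_lt x; case: (eqVneq (pos x + 1) d) => [->|ne_d] lt_d.
  by rewrite modnn; lia.
by rewrite modn_small; lia.
Qed.

Lemma sum_pos_eq j (rho : 'I_n -> nat) : j < d -> (forall x, rho (g x) = rho x) ->
  \sum_(x | pos x == j) rho x = \sum_(x | pos x == 0) rho x.
Proof.
move=> lt_j rhoS; rewrite [LHS](reindex_inj (@perm_inj _ (g ^+ j)%g)) /=.
apply: eq_big => [x|x _]; last exact: expg_invariant.
have := pos_lt x; rewrite pos_expg; case: (ltnP (pos x + j) d) => [lt_d|ge_d] lt_x.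
  by rewrite modn_small //; apply/eqP/eqP; lia.
have -> : pos x + j = (pos x + j - d) + d by lia.
by rewrite modnDr modn_small; [apply/eqP/eqP; lia | lia].
Qed.

Lemma sum_invariant (rho : 'I_n -> nat) : (forall x, rho (g x) = rho x) ->
  \sum_x rho x = d * \sum_(x | pos x == 0) rho x.
Proof.
move=> rhoS; rewrite (partition_big (fun x => Ordinal (pos_lt x)) xpredT) //=.
rewrite (eq_bigr (fun _ => \sum_(x | pos x == 0) rho x)) ?sum_nat_const ?card_ord //.
by move=> j _; rewrite -(sum_pos_eq (ltn_ord j) rhoS).
Qed.

Definition nbase := #|[pred x | pos x == 0]|.

Definition base_sum (f : 'I_n -> 'I_n -> nat) := \sum_(x | pos x == 0) \sum_y f x y.

Lemma sum2_invariant (f : 'I_n -> 'I_n -> nat) :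
  (forall x y, f (g x) (g y) = f x y) -> \sum_x \sum_y f x y = d * base_sum f.
Proof.
move=> fS; apply: sum_invariant => x.
by rewrite [LHS](reindex_inj (@perm_inj _ g)) /=; apply: eq_bigr => y _; rewrite fS.
Qed.

Lemma base_sum_eq (f f' : 'I_n -> 'I_n -> nat) :
  (forall x y, f (g x) (g y) = f x y) -> (forall x y, f' (g x) (g y) = f' x y) ->
  \sum_x \sum_y f x y = \sum_x \sum_y f' x y -> base_sum f = base_sum f'.
Proof.
by move=> fS f'S; rewrite !sum2_invariant // => /eqP; rewrite eqn_pmul2l // => /eqP.
Qed.

Lemma n_eq_mul_nbase : n = d * nbase.
Proof.
by have := sum_invariant (rho := fun _ => 1) (fun _ => erefl); rewrite !sum1_card card_ord.
Qed.

Lemma sum_pos : \sum_x pos x = nbase * 'C(d, 2).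
Proof.
rewrite (partition_big (fun x => Ordinal (pos_lt x)) xpredT) //= -bin2_sum big_mkord.
rewrite big_distrr /=; apply: eq_bigr => j _.
rewrite (eq_bigr (fun _ => val j)) => [|x /eqP <- //]; rewrite sum_nat_const.
have := sum_pos_eq (rho := fun _ => 1) (ltn_ord j) (fun _ => erefl).
by rewrite !sum1_card => ->.
Qed.

Definition gap a b := (pos b + d - pos a) %% d.

Lemma gapE a b : gap a b = if pos a <= pos b then pos b - pos a else pos b + d - pos a.
Proof.
rewrite /gap; have := pos_lt a; have := pos_lt b; case: ifP => le_ab lt_b lt_a.
  have -> : pos b + d - pos a = (pos b - pos a) + d by lia.
  by rewrite modnDr modn_small //; lia.
by rewrite modn_small //; lia.
Qed.

Lemma gap_perm a b : gap (g a) (g b) = gap a b.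
Proof.
rewrite !gapE; have := pos_lt a; have := pos_lt b.
by case: (posS_cases a) (posS_cases b); repeat (case: ifP => ?); lia.
Qed.

Lemma base_sum_gap : base_sum gap = nbase * (nbase * 'C(d, 2)).
Proof.
rewrite /base_sum (eq_bigr (fun _ => nbase * 'C(d, 2))) ?sum_nat_const // => x /eqP px.
by rewrite -sum_pos; apply: eq_bigr => y _; rewrite gapE px subn0.
Qed.

Lemma dvdn_gap2 x y : d %| gap x y + gap y x.
Proof.
have : gap x y + gap y x = 0 \/ gap x y + gap y x = d.
  by rewrite !gapE; have := pos_lt x; have := pos_lt y; repeat (case: ifP => ?); lia.
by case=> ->.
Qed.

Lemma dvdn_gap3 x y z : d %| gap x y + gap y z + gap z x.
Proof.
have : gap x y + gap y z + gap z x = 0 \/ gap x y + gap y z + gap z x = d \/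
       gap x y + gap y z + gap z x = d * 2.
  rewrite !gapE; have := pos_lt x; have := pos_lt y; have := pos_lt z.
  by repeat (case: ifP => ?); lia.
by case=> [->|[->|->]]; rewrite ?dvdn0 ?dvdn_mulr.
Qed.

Lemma dvdn_gap3S x y z : d %| gap x y + gap (g z) x + gap y z + 1.
Proof.
have : gap x y + gap (g z) x + gap y z + 1 = d \/
       gap x y + gap (g z) x + gap y z + 1 = d * 2.
  rewrite !gapE; have := pos_lt x; have := pos_lt y; have := pos_lt z.
  by case: (posS_cases z); repeat (case: ifP => ?); lia.
by case=> ->; rewrite ?dvdn_mulr.
Qed.

End CyclePosition.

Lemma even_of_dvdn_bin2 d c : 0 < d -> 2 %| d -> d %| c * (c * 'C(d, 2)) -> 2 %| c.
Proof.
move=> d_gt0 even_d /dvdnP [m hm].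
have hC := bin2_double d.
have {}hm : 2 * m = c * c * d.-1.
  by apply/eqP; rewrite -(eqn_pmul2l d_gt0); apply/eqP; nia.
have : 2 %| c * c * d.-1 by rewrite -hm dvdn_mulr.
rewrite !Euclid_dvdM // orbb => /orP [//|even_dpred].
have : 2 %| d - d.-1 by rewrite dvdn_sub.
by have -> : d - d.-1 = 1 by lia.
Qed.

Lemma three_dvd_of_dvdn_bin2 d c K : 0 < d -> 3 * K = d * (c * c) ->
  d %| c * (c * 'C(d, 2)) + K -> 3 %| c.
Proof.
move=> d_gt0 hK /dvdnP [m hm].
have hC := bin2_double d.
have {}hm : 6 * m = c * c * (3 * d - 1).
  apply/eqP; rewrite -(eqn_pmul2l d_gt0); apply/eqP.
  by case: d d_gt0 hK hC hm => [//|e] _ /= hK hC hm; nia.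
have : 3 %| c * c * (3 * d - 1) by rewrite -hm (dvdn_mulr _ (isT : 3 %| 6)).
rewrite !Euclid_dvdM // orbb => /orP [//|dvd3].
have : 3 %| 3 * d - (3 * d - 1) by rewrite dvdn_sub ?dvdn_mulr.
by have -> : 3 * d - (3 * d - 1) = 1 by lia.
Qed.

Section CyclicAutoparatopism.

Variables (n d : nat) (g : 'S_n) (pos : 'I_n -> nat) (L : 'I_n -> 'I_n -> 'I_n).
Hypothesis d_gt0 : 0 < d.
Hypothesis pos_lt : forall x, pos x < d.
Hypothesis posS : forall x, pos (g x) = (pos x + 1) %% d.
Hypothesis L_row : forall x, injective (L x).
Hypothesis L_col : forall y, injective (fun x => L x y).
Hypothesis L_shift : forall x y, L (g (L x y)) x = y.

Lemma L_shift2 x y : L (g y) (g (L x y)) = x.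
Proof. by have := L_shift (g (L x y)) x; rewrite (L_shift x y). Qed.

Lemma L_autotopism x y : L (g x) (g y) = g (L x y).
Proof. by have := L_shift (g y) (g (L x y)); rewrite (L_shift2 x y). Qed.

Lemma sum_shift (F : 'I_n -> 'I_n -> nat) :
  \sum_x \sum_y F x y = \sum_x \sum_y F (g (L x y)) x.
Proof.
rewrite !pair_bigA /=.
have shift_inj : injective (fun c : 'I_n * 'I_n => (g (L c.1 c.2), c.1)).
  by move=> [x y] [x' y'] /= [/perm_inj + eqx]; rewrite -eqx => /L_row ->.
by rewrite (reindex_inj shift_inj).
Qed.

Local Notation gap := (gap d pos).
Local Notation base_sum := (base_sum pos).
Local Notation nbase := (nbase pos).

Lemma even_nbase : 2 %| d -> 2 %| nbase.
Proof.
move=> even_d.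
have gapS := gap_perm d_gt0 pos_lt posS.
have col_sum : base_sum (fun x y => gap y (L x y)) = base_sum gap.
  apply: (base_sum_eq d_gt0 pos_lt posS _ gapS) => [x y|]; first by rewrite L_autotopism gapS.
  by rewrite exchange_big; apply: eq_bigr => y _; rewrite [RHS](reindex_inj (@L_col y)).
have row_sum : base_sum (fun x y => gap x (L x y)) = base_sum gap.
  by apply: eq_bigr => x _; rewrite [RHS](reindex_inj (@L_row x)).
set T := base_sum (fun x y => gap (L x y) x).
have dvd3 : d %| base_sum gap + base_sum gap + T.
  rewrite -{2}col_sum /base_sum -!big_split; apply: dvdn_sum => x _.
  by rewrite -!big_split; apply: dvdn_sum => y _; exact: (dvdn_gap3 d_gt0 pos_lt).
have dvd2 : d %| base_sum gap + T.
  rewrite -{1}row_sum /base_sum -big_split; apply: dvdn_sum => x _.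
  by rewrite -big_split; apply: dvdn_sum => y _; exact: (dvdn_gap2 d_gt0 pos_lt).
apply: (even_of_dvdn_bin2 d_gt0 even_d); rewrite -(base_sum_gap d_gt0 pos_lt posS).
by move: dvd3; rewrite -addnA addnC (dvdn_addr _ dvd2).
Qed.

Section ThreeDividesD.

Hypothesis three_dvd_d : 3 %| d.

Definition cell_class x y := (pos x + pos y + pos (L x y)) %% 3.

Lemma cell_class_perm x y : cell_class (g x) (g y) = cell_class x y.
Proof.
rewrite /cell_class L_autotopism; case/dvdnP: three_dvd_d => e de.
by case: (posS_cases d_gt0 pos_lt posS x) (posS_cases d_gt0 pos_lt posS y)
          (posS_cases d_gt0 pos_lt posS (L x y)); lia.
Qed.

Lemma cell_class_shift x y : cell_class (g (L x y)) x = (cell_class x y + 1) %% 3.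
Proof.
rewrite /cell_class L_shift; case/dvdnP: three_dvd_d => e de.
by case: (posS_cases d_gt0 pos_lt posS (L x y)); lia.
Qed.

Lemma cell_class_shift2 x y : cell_class (g y) (g (L x y)) = (cell_class x y + 2) %% 3.
Proof.
rewrite /cell_class L_shift2; case/dvdnP: three_dvd_d => e de.
by case: (posS_cases d_gt0 pos_lt posS y) (posS_cases d_gt0 pos_lt posS (L x y)); lia.
Qed.

Lemma cell_class_lt x y : cell_class x y < 3.
Proof. exact: ltn_pmod. Qed.

Lemma sum_cell_class0 (F : 'I_n -> 'I_n -> nat) :
  \sum_x \sum_y (cell_class x y == 0) * (F x y + F (g (L x y)) x + F (g y) (g (L x y)))
  = \sum_x \sum_y F x y.
Proof.
have class1 : \sum_x \sum_y (cell_class x y == 1) * F x y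
              = \sum_x \sum_y (cell_class x y == 0) * F (g (L x y)) x.
  rewrite sum_shift; apply: eq_bigr => x _; apply: eq_bigr => y _.
  by rewrite cell_class_shift; have := cell_class_lt x y; case: cell_class => [|[|[|]]].
have class2 : \sum_x \sum_y (cell_class x y == 2) * F x y
              = \sum_x \sum_y (cell_class x y == 0) * F (g y) (g (L x y)).
  rewrite sum_shift sum_shift; apply: eq_bigr => x _; apply: eq_bigr => y _.
  by rewrite L_shift cell_class_shift2; have := cell_class_lt x y; case: cell_class => [|[|[|]]].
have -> : \sum_x \sum_y F x y = \sum_x \sum_y (cell_class x y == 0) * F x y
    + \sum_x \sum_y (cell_class x y == 1) * F x y
    + \sum_x \sum_y (cell_class x y == 2) * F x y.
  rewrite -!sum2D; apply: eq_bigr => x _; apply: eq_bigr => y _.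
  by have := cell_class_lt x y; case: cell_class => [|[|[|]]] //= _; rewrite ?mul0n ?mul1n ?addn0.
by rewrite class1 class2 -!sum2D; apply: eq_bigr => x _; apply: eq_bigr => y _; rewrite !mulnDr.
Qed.

Lemma three_dvd_nbase : 3 %| nbase.
Proof.
have gapS := gap_perm d_gt0 pos_lt posS.
pose G x y := (cell_class x y == 0) * (gap x y + gap (g (L x y)) x + gap (g y) (g (L x y))).
pose K := base_sum (fun x y => cell_class x y == 0 : nat).
have GS x y : G (g x) (g y) = G x y by rewrite /G cell_class_perm L_autotopism !gapS.
have base_G : base_sum G = base_sum gap.
  by apply: (base_sum_eq d_gt0 pos_lt posS) => //; rewrite sum_cell_class0.
have card_class0 : 3 * K = d * (nbase * nbase).
  have := sum_cell_class0 (fun _ _ => 1).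
  rewrite (sum2_invariant d_gt0 pos_lt posS) => [|x y]; last by rewrite cell_class_perm.
  rewrite (eq_bigr (fun _ => n)) => [|x _]; last by rewrite sum_nat_const card_ord muln1.
  have -> : base_sum (fun x y => (cell_class x y == 0) * (1 + 1 + 1)) = 3 * K.
    rewrite big_distrr; apply: eq_bigr => x _.
    by rewrite big_distrr; apply: eq_bigr => y _; rewrite mulnC.
  rewrite sum_nat_const card_ord => total.
  have n_eq := n_eq_mul_nbase d_gt0 pos_lt posS.
  by apply/eqP; rewrite -(eqn_pmul2l d_gt0); apply/eqP; nia.
have dvd_GK : d %| base_sum G + K.
  rewrite /base_sum -big_split; apply: dvdn_sum => x _.
  rewrite -big_split; apply: dvdn_sum => y _ /=; rewrite /G gapS -{2}[nat_of_bool _]muln1 -mulnDr.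
  by apply: dvdn_mull; exact: (dvdn_gap3S d_gt0 pos_lt posS).
apply: (three_dvd_of_dvdn_bin2 d_gt0 card_class0).
by rewrite -(base_sum_gap d_gt0 pos_lt posS) -base_G.
Qed.

End ThreeDividesD.

End CyclicAutoparatopism.

Lemma autopara123_shift n (gamma : 'S_n) (L : 'I_n -> 'I_n -> 'I_n) :
  autopara123 1 1 gamma L -> forall x y, L (gamma (L x y)) x = y.
Proof.
move=> auto x y.
have cell : (x, y, L x y) \in triples L by rewrite inE.
have : (gamma (L x y), (1%g : 'S_n) x, (1%g : 'S_n) y) \in para123_image 1 1 gamma L.
  exact: (imset_f (fun t : 'I_n * 'I_n * 'I_n => (gamma t.2, (1%g : 'S_n) t.1.1, (1%g : 'S_n) t.1.2)) cell).
by rewrite auto inE /= !perm1 => /eqP.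
Qed.

Theorem theorem5p2 (d r : nat) (gamma : 'S_(d * r)) :
  0 < d -> 0 < r ->
  (forall x : 'I_(d * r), #|porbit gamma x| = d) ->
  #|porbits gamma| = r ->
  in_Par123 1 1 gamma ->
  (3 %| d -> 3 %| r) /\ (6 %| d -> 6 %| r).
Proof.
move=> d_gt0 _ card_orbit _ [L [[L_row L_col] /autopara123_shift L_shift]].
have [pos [pos_lt posS]] := porbit_position d_gt0 card_orbit.
have nbaseE : nbase pos = r.
  by apply/eqP; rewrite -(eqn_pmul2l d_gt0) -(n_eq_mul_nbase d_gt0 pos_lt posS).
have part_i : 3 %| d -> 3 %| r.
  by rewrite -nbaseE; exact: (three_dvd_nbase d_gt0 pos_lt posS L_row L_shift).
split=> // six_dvd_d.
have even_r : 2 %| r.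
  rewrite -nbaseE; apply: (even_nbase d_gt0 pos_lt posS L_row L_col L_shift).
  exact: dvdn_trans six_dvd_d.
by rewrite (@Gauss_dvd 2 3) // even_r part_i // (dvdn_trans _ six_dvd_d).
Qed.
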